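(* Let $\Lambda$ be a set with $\operatorname{Card}\Lambda\geq\aleph$ and let $(Y,\tau_d)$ be any dendrite. Then there exists an upper semicontinuous decomposition $\mathcal D$ of $(\{0,1\}^\Lambda,\tau_0^\Lambda)$ whose decomposition space $(\mathcal D,\tau(\mathcal D))$ is homeomorphic to $Y$; in particular $(\mathcal D,\tau(\mathcal D))$ is a metrizable space which is a dendrite, although $(\{0,1\}^\Lambda,\tau_0^\Lambda)$ itself is not metrizable.
   Context: $\{0,1\}^\Lambda=\{\varphi:\Lambda\to\{0,1\}\}$ carries the topology $\tau_0^\Lambda$, the product topology of the discrete topology $\tau_0$ on $\{0,1\}$ (base: sets $\{\varphi;\ \varphi(\lambda_i)\in G_{\lambda_i},\ i=1,\dots,n\}$ with $G_{\lambda_i}\subset\{0,1\}$, finitely many $\lambda_i\in\Lambda$). A dendrite is a locally connected, connected, compact metric space containing no simple closed curve. A decomposition $\mathcal D$ of $X$ is a collection of nonempty pairwise disjoint subsets with union $X$; the decomposition topology is $\tau(\mathcal D)=\{\mathcal U\subset\mathcal D;\ \bigcup_{D\in\mathcal U}D \text{ open in } X\}$. $\mathcal D$ is upper semicontinuous if for every $D\in\mathcal D$ and open $U\supseteq D$ there is an open $u\supseteq D$ with $A\subset U$ for all $A\in\mathcal D$ meeting $u$. *)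

From Stdlib Require Import Reals List Classical.
Open Scope R_scope.

Definition opens (X : Type) := (X -> Prop) -> Prop.

Definition is_metric {Y : Type} (d : Y -> Y -> R) : Prop :=
  (forall x y, 0 <= d x y) /\
  (forall x y, d x y = 0 <-> x = y) /\
  (forall x y, d x y = d y x) /\
  (forall x y z, d x z <= d x y + d y z).

Definition metric_open {Y : Type} (d : Y -> Y -> R) : opens Y :=
  fun U => forall x, U x -> exists e, 0 < e /\ forall y, d x y < e -> U y.

Definition metrizable {X : Type} (op : opens X) : Prop :=
  exists d : X -> X -> R, is_metric d /\ forall U, op U <-> metric_open d U.

Definition continuous {X Y : Type} (opX : opens X) (opY : opens Y) (f : X -> Y) : Prop :=
  forall V, opY V -> opX (fun x => V (f x)).

Definition homeomorphic {X Y : Type} (opX : opens X) (opY : opens Y) : Prop :=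
  exists (f : X -> Y) (g : Y -> X),
    (forall x, g (f x) = x) /\ (forall y, f (g y) = y) /\
    continuous opX opY f /\ continuous opY opX g.

Definition compact {X : Type} (op : opens X) : Prop :=
  forall (I : Type) (U : I -> X -> Prop),
    (forall i, op (U i)) -> (forall x, exists i, U i x) ->
    exists l : list I, forall x, exists i, In i l /\ U i x.

Definition connected_set {X : Type} (op : opens X) (S : X -> Prop) : Prop :=
  ~ exists U V, op U /\ op V /\
      (forall x, S x -> U x \/ V x) /\
      (forall x, S x -> ~ (U x /\ V x)) /\
      (exists x, S x /\ U x) /\ (exists x, S x /\ V x).

Definition connected {X : Type} (op : opens X) : Prop :=
  connected_set op (fun _ => True).

Definition locally_connected {X : Type} (op : opens X) : Prop :=
  forall x U, op U -> U x ->
    exists V, op V /\ V x /\ (forall y, V y -> U y) /\ connected_set op V.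

Definition circle := { p : R * R | (fst p) ^ 2 + (snd p) ^ 2 = 1 }.
Definition circle_dist (p q : circle) : R :=
  sqrt ((fst (proj1_sig p) - fst (proj1_sig q)) ^ 2 +
        (snd (proj1_sig p) - snd (proj1_sig q)) ^ 2).

Definition contains_simple_closed_curve {X : Type} (op : opens X) : Prop :=
  exists f : circle -> X,
    (forall p q, f p = f q -> p = q) /\
    continuous (metric_open circle_dist) op f /\
    (forall U, metric_open circle_dist U ->
       exists V, op V /\ forall p, U p <-> V (f p)).

Definition dendrite {Y : Type} (d : Y -> Y -> R) : Prop :=
  is_metric d /\ (exists y : Y, True) /\
  compact (metric_open d) /\ connected (metric_open d) /\
  locally_connected (metric_open d) /\
  ~ contains_simple_closed_curve (metric_open d).

(* tau_0^Lambda: U is open iff it is a union of basic sets, i.e. every point phi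
   of U has a finite set of coordinates l such that all psi agreeing with phi on l
   lie in U. *)
Definition prod_open (L : Type) : opens (L -> bool) :=
  fun U => forall phi, U phi -> exists l : list L,
    forall psi, (forall lam, In lam l -> psi lam = phi lam) -> U psi.

Definition decomposition {X : Type} (D : (X -> Prop) -> Prop) : Prop :=
  (forall A, D A -> exists x, A x) /\
  (forall A B, D A -> D B -> A <> B -> forall x, ~ (A x /\ B x)) /\
  (forall x, exists A, D A /\ A x).

Definition dec_space {X : Type} (D : (X -> Prop) -> Prop) := { A : X -> Prop | D A }.

Definition dec_open {X : Type} (op : opens X) (D : (X -> Prop) -> Prop)
  : opens (dec_space D) :=
  fun UU => op (fun x => exists A : dec_space D, UU A /\ proj1_sig A x).

Definition usc {X : Type} (op : opens X) (D : (X -> Prop) -> Prop) : Prop :=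
  forall A, D A -> forall U, op U -> (forall x, A x -> U x) ->
    exists u, op u /\ (forall x, A x -> u x) /\
      forall B, D B -> (exists x, B x /\ u x) -> forall x, B x -> U x.

(* Every nonempty compact metric space is a continuous image of the Cantor cube {0,1}^N
   (Alexandroff-Hausdorff), hence, through the restriction to countably many coordinates,
   of the compact cube {0,1}^L.  A continuous map from a compact space onto a metric space
   is closed, so its fibres form an upper semicontinuous decomposition whose decomposition
   space is the target; of the dendrite only compactness and nonemptiness are used.
   The cube is not metrizable: countably many basic neighbourhoods of a point constrain
   only countably many coordinates, and Card L >= c leaves one coordinate free. *)

From Pilot Require Import Defs.
From Stdlib Require Import Reals List Classical.
From Stdlib Require Import Lra Lia Cantor.
From Stdlib Require Import ClassicalEpsilon FunctionalExtensionality ProofIrrelevance.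
Open Scope R_scope.

Section Metric.
Context {Y : Type} {d : Y -> Y -> R} (Hm : is_metric d).

Lemma metric_ge0 x y : 0 <= d x y.
Proof. apply Hm. Qed.

Lemma metric_refl x : d x x = 0.
Proof. apply (proj1 (proj2 Hm)); reflexivity. Qed.

Lemma metric_eq0 x y : d x y = 0 -> x = y.
Proof. apply (proj1 (proj2 Hm)). Qed.

Lemma metric_sym x y : d x y = d y x.
Proof. apply Hm. Qed.

Lemma metric_triangle x y z : d x z <= d x y + d y z.
Proof. apply Hm. Qed.

Lemma ball_open c r : metric_open d (fun y => d c y < r).
Proof.
  intros x Hx. exists (r - d c x). split; [lra|].
  intros y Hy. pose proof (metric_triangle c x y). lra.
Qed.

End Metric.

Lemma inv_pow2_pos n : 0 < (/ 2) ^ n.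
Proof. apply pow_lt; lra. Qed.

Lemma inv_pow2_S n : (/ 2) ^ S n = (/ 2) ^ n / 2.
Proof. simpl; field. Qed.

Lemma inv_pow2_small e : 0 < e -> exists n, (/ 2) ^ n < e.
Proof.
  intros He. destruct (pow_lt_1_zero (/ 2)) with (y := e) as [N HN]; auto.
  - rewrite Rabs_pos_eq; lra.
  - exists N. specialize (HN N (Nat.le_refl N)).
    rewrite Rabs_pos_eq in HN; [exact HN | apply Rlt_le, inv_pow2_pos].
Qed.

Lemma finite_min_pos {A : Type} (g : A -> R) (l : list A) :
  exists del, 0 < del /\ forall z, In z l -> 0 < g z -> del <= g z.
Proof.
  induction l as [|a l [del [Hdel Hmin]]].
  - exists 1. split; [lra | intros z []].
  - destruct (Rlt_dec 0 (g a)) as [Ha|Ha].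
    + exists (Rmin (g a) del). split; [apply Rmin_pos; auto|].
      intros z [<-|Hz] Hgz; [apply Rmin_l|].
      eapply Rle_trans; [apply Rmin_r | auto].
    + exists del. split; auto. intros z [<-|Hz] Hgz; [contradiction | auto].
Qed.

Definition trisect (v : R) (p : R * R) : R * R :=
  let (a, b) := p in
  if Rlt_dec v ((a + b) / 2) then (a + 2 * (b - a) / 3, b) else (a, a + (b - a) / 3).

Fixpoint nested (u : nat -> R) (n : nat) : R * R :=
  match n with
  | O => (0, 1)
  | S k => trisect (u k) (nested u k)
  end.

Lemma trisect_spec v p : fst p < snd p ->
  fst (trisect v p) < snd (trisect v p) /\ fst p <= fst (trisect v p) /\
  snd (trisect v p) <= snd p /\ (v < fst (trisect v p) \/ snd (trisect v p) < v).
Proof.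
  destruct p as [a b]; simpl. intros H.
  destruct (Rlt_dec v ((a + b) / 2)); simpl; lra.
Qed.

Lemma nested_lt u n : fst (nested u n) < snd (nested u n).
Proof. induction n as [|n IH]; simpl; [lra | apply trisect_spec, IH]. Qed.

Lemma nested_mono u n p :
  fst (nested u n) <= fst (nested u (n + p)) /\ snd (nested u (n + p)) <= snd (nested u n).
Proof.
  induction p as [|p IH].
  - rewrite Nat.add_0_r; lra.
  - rewrite Nat.add_succ_r. pose proof (trisect_spec (u (n + p)%nat) _ (nested_lt u (n + p)%nat)).
    simpl. lra.
Qed.

Lemma nested_fst_le_snd u n m : fst (nested u n) <= snd (nested u m).
Proof.
  destruct (Nat.le_ge_cases n m) as [H|H].
  - replace m with (n + (m - n))%nat by lia.
    pose proof (nested_mono u n (m - n)). pose proof (nested_lt u (n + (m - n))). lra.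
  - replace n with (m + (n - m))%nat by lia.
    pose proof (nested_mono u m (n - m)). pose proof (nested_lt u (m + (n - m))). lra.
Qed.

Lemma R_not_enumerable (u : nat -> R) : exists r, forall n, u n <> r.
Proof.
  set (E := fun x => exists n, x = fst (nested u n)).
  assert (Hb : bound E).
  { exists 1. intros x [n ->]. pose proof (nested_fst_le_snd u n 0). simpl in H. lra. }
  destruct (completeness E Hb) as [x [Hub Hlub]]; [exists 0, 0%nat; reflexivity|].
  exists x. intros n Heq.
  assert (H1 : fst (nested u (S n)) <= x) by (apply Hub; exists (S n); reflexivity).
  assert (H2 : x <= snd (nested u (S n))).
  { apply Hlub. intros y [m ->]. apply nested_fst_le_snd. }
  pose proof (trisect_spec (u n) _ (nested_lt u n)). simpl in H1, H2. lra.
Qed.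

Definition chain {T : Type} (le : T -> T -> Prop) (C : T -> Prop) : Prop :=
  forall x y, C x -> C y -> le x y \/ le y x.

Section BourbakiWitt.
Variables (T : Type) (le : T -> T -> Prop) (sup : (T -> Prop) -> T).
Hypothesis le_refl : forall x, le x x.
Hypothesis le_trans : forall x y z, le x y -> le y z -> le x z.
Hypothesis le_antisym : forall x y, le x y -> le y x -> x = y.
Hypothesis sup_ub : forall C c, chain le C -> C c -> le c (sup C).
Hypothesis sup_least : forall C u, chain le C -> (forall c, C c -> le c u) -> le (sup C) u.

Inductive tower (g : T -> T) : T -> Prop :=
| tower_step x : tower g x -> tower g (g x)
| tower_sup C : (forall c, C c -> tower g c) -> chain le C -> tower g (sup C).

(* The classical argument: every element [c] of the tower is "extreme", i.e. comparable
   in a strong sense with all other elements, so the tower is a chain whose supremum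
   is fixed by [g]. *)
Lemma bourbaki_witt (g : T -> T) : (forall x, le x (g x)) ->
  exists s, g s = s /\ tower g s.
Proof.
  intros infl.
  set (extreme := fun c => forall x, tower g x -> le x c -> x <> c -> le (g x) c).
  assert (split_by : forall c, tower g c -> extreme c -> forall x, tower g x ->
            le x c \/ le (g c) x).
  { intros c Mc Ec x Mx. induction Mx as [x Mx IH | C HC IH Hch].
    - destruct IH as [H|H].
      + destruct (classic (x = c)) as [->|Hne]; [right; apply le_refl | left; apply Ec; auto].
      + right. eapply le_trans; [exact H | apply infl].
    - destruct (classic (exists y, C y /\ le (g c) y)) as [[y [Cy Hy]]|Hn].
      + right. eapply le_trans; [exact Hy | apply sup_ub; auto].
      + left. apply sup_least; auto. intros y Cy.
        destruct (IH y Cy) as [H|H]; [exact H | exfalso; eauto]. }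
  assert (all_extreme : forall c, tower g c -> extreme c).
  { intros c Mc. induction Mc as [c Mc IH | C HC IH Hch]; intros x Mx Hle Hne.
    - destruct (split_by c Mc IH x Mx) as [H|H].
      + destruct (classic (x = c)) as [->|Hne2]; [apply le_refl|].
        eapply le_trans; [apply IH; auto | apply infl].
      + exfalso. apply Hne. apply le_antisym; auto.
    - assert (Hex : exists c', C c' /\ ~ le c' x).
      { apply NNPP. intros Hn. apply Hne. apply le_antisym; auto.
        apply sup_least; auto. intros c' Cc'. apply NNPP. intros Hn2. apply Hn. eauto. }
      destruct Hex as [c' [Cc' Hn']].
      destruct (split_by c' (HC c' Cc') (IH c' Cc') x Mx) as [H|H].
      + eapply le_trans; [apply (IH c' Cc'); auto | apply sup_ub; auto].
        intros ->. apply Hn', le_refl.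
      + exfalso. apply Hn'. eapply le_trans; [apply infl | exact H]. }
  assert (Hch : chain le (tower g)).
  { intros x c Mx Mc. destruct (split_by c Mc (all_extreme c Mc) x Mx) as [H|H]; auto.
    right. eapply le_trans; [apply infl | exact H]. }
  exists (sup (tower g)). split.
  - apply le_antisym; [|apply infl]. apply sup_ub; auto. apply tower_step, tower_sup; auto.
  - apply tower_sup; auto.
Qed.

Lemma zorn_chain_complete (P : T -> Prop) :
  (forall C, chain le C -> (forall c, C c -> P c) -> P (sup C)) ->
  exists m, P m /\ forall x, P x -> le m x -> x = m.
Proof.
  intros HP.
  set (g := fun p => match excluded_middle_informative
                             (exists q, P q /\ le p q /\ p <> q) with
                     | left H => proj1_sig (constructive_indefinite_description _ H)
                     | right _ => p end).
  assert (Hg : forall p, (P p -> P (g p)) /\ le p (g p) /\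
                 (g p = p -> ~ exists q, P q /\ le p q /\ p <> q)).
  { intros p. unfold g. destruct excluded_middle_informative as [H|H].
    - destruct (constructive_indefinite_description _ H) as [q [Hq1 [Hq2 Hq3]]]; simpl.
      repeat split; auto.
    - repeat split; auto. }
  destruct (bourbaki_witt g (fun p => proj1 (proj2 (Hg p)))) as [s [Hfix Htw]].
  exists s. split.
  - clear Hfix. induction Htw as [x _ IH | C _ IH Hch]; [apply Hg, IH | apply HP; auto].
  - intros x Px Hsx. apply NNPP. intros Hne.
    apply (proj2 (proj2 (Hg s)) Hfix). exists x. auto.
Qed.

End BourbakiWitt.

(* Compactness of the cube [{0,1}^L] is proved via a maximal partial assignment all of
   whose basic neighbourhoods fail to be finitely covered; maximality forces it to be
   total, and the point it defines is then not covered at all. *)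
Section CubeCompact.
Variable L : Type.

Definition pa_le (p q : L -> option bool) : Prop :=
  forall l b, p l = Some b -> q l = Some b.

Definition pa_sup (C : (L -> option bool) -> Prop) (l : L) : option bool :=
  match excluded_middle_informative (exists b c, C c /\ c l = Some b) with
  | left H => Some (proj1_sig (constructive_indefinite_description _ H))
  | right _ => None
  end.

Lemma pa_sup_spec C l b : pa_sup C l = Some b -> exists c, C c /\ c l = Some b.
Proof.
  unfold pa_sup. destruct excluded_middle_informative as [H|H]; [|discriminate].
  destruct (constructive_indefinite_description _ H) as [b' Hb']; simpl.
  intros E; inversion E; subst; auto.
Qed.

Lemma pa_sup_ub C c : chain pa_le C -> C c -> pa_le c (pa_sup C).
Proof.
  intros Hch Cc l b Hb. unfold pa_sup.
  destruct excluded_middle_informative as [H|H]; [|exfalso; eauto].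
  destruct (constructive_indefinite_description _ H) as [b' [c' [Cc' Hc']]]; simpl.
  destruct (Hch c c' Cc Cc') as [E|E].
  - rewrite (E _ _ Hb) in Hc'. congruence.
  - rewrite (E _ _ Hc') in Hb. congruence.
Qed.

Lemma pa_sup_least C u : (forall c, C c -> pa_le c u) -> pa_le (pa_sup C) u.
Proof.
  intros H l b Hb. destruct (pa_sup_spec C l b Hb) as [c [Cc Hc]]. exact (H c Cc l b Hc).
Qed.

Lemma pa_le_antisym p q : pa_le p q -> pa_le q p -> p = q.
Proof.
  intros H1 H2. apply functional_extensionality. intros l.
  destruct (p l) as [b|] eqn:E; [symmetry; auto|].
  destruct (q l) as [b|] eqn:E2; auto. rewrite (H2 _ _ E2) in E; discriminate.
Qed.

Lemma pa_sup_finite C ls : chain pa_le C ->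
  exists c, (c = (fun _ => None) \/ C c) /\
    forall l b, In l ls -> pa_sup C l = Some b -> c l = Some b.
Proof.
  intros Hch. induction ls as [|l0 ls [c [Hc1 Hc2]]].
  - exists (fun _ => None). split; [auto | intros l b []].
  - destruct (pa_sup C l0) as [b0|] eqn:E0.
    2: { exists c. split; auto. intros l b [<-|Hin] E; [congruence | auto]. }
    destruct (pa_sup_spec C l0 b0 E0) as [c' [Cc' Hc']].
    destruct Hc1 as [->|Cc].
    + exists c'. split; auto. intros l b [<-|Hin] E; [congruence|].
      specialize (Hc2 l b Hin E). discriminate.
    + destruct (Hch c c' Cc Cc') as [Hle|Hle].
      * exists c'. split; auto. intros l b [<-|Hin] E; [congruence | auto].
      * exists c. split; auto. intros l b [<-|Hin] E; [|auto].
        rewrite E0 in E. inversion E; subst. auto.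
Qed.

Variables (I : Type) (U : I -> (L -> bool) -> Prop).

Definition agrees_on (ls : list L) (p : L -> option bool) (x : L -> bool) : Prop :=
  forall l, In l ls -> forall b, p l = Some b -> x l = b.

Definition finitely_covered (S : (L -> bool) -> Prop) : Prop :=
  exists li : list I, forall x, S x -> exists i, In i li /\ U i x.

Definition uncovered (p : L -> option bool) : Prop :=
  forall ls, ~ finitely_covered (agrees_on ls p).

Lemma uncovered_sup C : uncovered (fun _ => None) -> chain pa_le C ->
  (forall c, C c -> uncovered c) -> uncovered (pa_sup C).
Proof.
  intros Hbot Hch HC ls [li Hli].
  destruct (pa_sup_finite C ls Hch) as [c [[->|Cc] Hc]].
  - apply (Hbot nil). exists li. intros x _. apply Hli.
    intros l Hin b E. specialize (Hc l b Hin E). discriminate.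
  - apply (HC c Cc ls). exists li. intros x Hx. apply Hli.
    intros l Hin b E. apply Hx; auto.
Qed.

Definition pa_set (p : L -> option bool) (l0 : L) (b : bool) (l : L) : option bool :=
  if excluded_middle_informative (l = l0) then Some b else p l.

Lemma maximal_uncovered_total s : uncovered s ->
  (forall q, uncovered q -> pa_le s q -> q = s) -> forall l, s l <> None.
Proof.
  intros Hs Hmax l0 E0.
  assert (Hext : forall b, pa_le s (pa_set s l0 b) /\ pa_set s l0 b <> s).
  { intros b. split.
    - intros l b' E. unfold pa_set. destruct excluded_middle_informative; congruence.
    - intros E. assert (E1 := f_equal (fun f => f l0) E). simpl in E1.
      unfold pa_set in E1. destruct excluded_middle_informative; congruence. }
  assert (Hcov : forall b, exists ls, finitely_covered (agrees_on ls (pa_set s l0 b))).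
  { intros b. apply NNPP. intros Hn. apply (proj2 (Hext b)), Hmax; [|apply Hext].
    intros ls Hf. apply Hn. eauto. }
  destruct (Hcov false) as [ls0 [li0 H0]], (Hcov true) as [ls1 [li1 H1]].
  apply (Hs (ls0 ++ ls1)). exists (li0 ++ li1). intros x Hx.
  assert (Hagree : forall ls, incl ls (ls0 ++ ls1) -> agrees_on ls (pa_set s l0 (x l0)) x).
  { intros ls Hincl l Hin b E. unfold pa_set in E.
    destruct excluded_middle_informative; [congruence | apply Hx; auto]. }
  destruct (x l0).
  - destruct (H1 x) as [i [Hi Ui]]; [apply Hagree, incl_appr, incl_refl|].
    exists i. split; [apply in_or_app|]; auto.
  - destruct (H0 x) as [i [Hi Ui]]; [apply Hagree, incl_appl, incl_refl|].
    exists i. split; [apply in_or_app|]; auto.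
Qed.

End CubeCompact.

Lemma cube_compact (L : Type) : Defs.compact (prod_open L).
Proof.
  intros I U HU Hcov. apply NNPP. intros Hnfc.
  assert (Hbot : uncovered L I U (fun _ => None)).
  { intros ls [li Hli]. apply Hnfc. exists li. intros x.
    apply Hli. intros l _ b E; discriminate. }
  destruct (zorn_chain_complete _ (pa_le L) (pa_sup L)
              (fun p l b E => E) (fun p q r H1 H2 l b E => H2 l b (H1 l b E))
              (pa_le_antisym L) (pa_sup_ub L) (fun C u _ => pa_sup_least L C u)
              (uncovered L I U) (fun C Hch HC => uncovered_sup L I U C Hbot Hch HC))
    as [s [Hs Hmax]].
  pose proof (maximal_uncovered_total L I U s Hs Hmax) as Htot.
  set (x := fun l => match s l with Some b => b | None => false end).
  destruct (Hcov x) as [i Hi]. destruct (HU i x Hi) as [l Hl].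
  apply (Hs l). exists (i :: nil). intros y Hy. exists i. split; [left; auto|].
  apply Hl. intros lam Hin. unfold x. destruct (s lam) as [b|] eqn:E.
  - apply Hy; auto.
  - exfalso; apply (Htot lam E).
Qed.

Section CompactMetric.
Variables (Y : Type) (d : Y -> Y -> R).
Hypothesis Hm : is_metric d.
Hypothesis Hc : Defs.compact (metric_open d).

Lemma compact_finite_net r : 0 < r -> exists l : list Y, forall y, exists c, In c l /\ d y c < r.
Proof.
  intros Hr. destruct (Hc Y (fun c y => d c y < r)) as [l Hl].
  - intros c; apply ball_open; auto.
  - intros y. exists y. rewrite (metric_refl Hm). auto.
  - exists l. intros y. destruct (Hl y) as [c [Hin H]]. exists c.
    rewrite (metric_sym Hm). auto.
Qed.

Lemma compact_cauchy_limit (y : nat -> Y) (B : nat -> R) :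
  (forall n m, (n <= m)%nat -> d (y n) (y m) <= B n) ->
  exists z, forall n, d (y n) z <= B n.
Proof.
  intros HB. apply NNPP. intros Hn.
  assert (Hfar : forall z, exists n, B n < d (y n) z).
  { intros z. apply NNPP. intros H2. apply Hn. exists z. intros n.
    apply Rnot_lt_le. intros H3. apply H2. eauto. }
  set (nz := fun z => proj1_sig (constructive_indefinite_description _ (Hfar z))).
  assert (Hnz : forall z, B (nz z) < d (y (nz z)) z).
  { intros z. unfold nz. destruct constructive_indefinite_description; auto. }
  destruct (Hc Y (fun z w => d z w < d (y (nz z)) z - B (nz z))) as [l Hl].
  - intros z. apply ball_open; auto.
  - intros w. exists w. rewrite (metric_refl Hm). specialize (Hnz w). lra.
  - set (m := list_max (map nz l)). destruct (Hl (y m)) as [z [Hin Hz]].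
    assert (Hle : (nz z <= m)%nat).
    { apply (proj1 (Forall_forall _ _) (proj1 (list_max_le _ m) (Nat.le_refl m))).
      apply in_map, Hin. }
    pose proof (HB (nz z) m Hle).
    pose proof (metric_triangle Hm (y (nz z)) (y m) z).
    pose proof (metric_sym Hm z (y m)). lra.
Qed.

End CompactMetric.

Fixpoint leading_ones (k : nat) (s : nat -> bool) : nat :=
  match k with
  | O => O
  | S k' => if s O then S (leading_ones k' (fun i => s (S i))) else O
  end.

Lemma leading_ones_ext k s t : (forall i, (i < k)%nat -> s i = t i) ->
  leading_ones k s = leading_ones k t.
Proof.
  revert s t. induction k as [|k IH]; intros s t H; simpl; auto.
  rewrite (H O ltac:(lia)). destruct (t O); auto.
  f_equal. apply IH. intros i Hi. apply H. lia.
Qed.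

Lemma leading_ones_ltb k m : leading_ones k (fun i => Nat.ltb i m) = Nat.min m k.
Proof.
  revert m. induction k as [|k IH]; intros m; simpl; [lia|].
  destruct m as [|m]; simpl; auto. f_equal. rewrite <- IH.
  apply leading_ones_ext. intros i _. reflexivity.
Qed.

(* Alexandroff-Hausdorff: the bits [s (to_nat (n, i))], i < |net n|, select (by their
   number of leading ones) a point of a [(/2)^n]-net; the selections are made into a
   Cauchy sequence by refusing jumps longer than [2 (/2)^n]. *)
Section CantorOnto.
Variables (Y : Type) (d : Y -> Y -> R).
Hypothesis Hm : is_metric d.
Hypothesis Hc : Defs.compact (metric_open d).
Variable y0 : Y.
Variable net : nat -> list Y.
Hypothesis net_dense : forall n y, exists c, In c (net n) /\ d y c < (/ 2) ^ n.

Definition net_point (n : nat) (s : nat -> bool) : Y :=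
  nth (leading_ones (length (net n)) (fun i => s (to_nat (n, i)))) (net n) y0.

Fixpoint approx (s : nat -> bool) (n : nat) : Y :=
  match n with
  | O => net_point O s
  | S k => if Rlt_dec (d (approx s k) (net_point (S k) s)) (2 * (/ 2) ^ k)
           then net_point (S k) s else approx s k
  end.

Lemma approx_step s k : d (approx s k) (approx s (S k)) < 2 * (/ 2) ^ k.
Proof.
  simpl. destruct Rlt_dec as [H|H]; auto.
  rewrite (metric_refl Hm). pose proof (inv_pow2_pos k); lra.
Qed.

Lemma approx_cauchy s n m : (n <= m)%nat -> d (approx s n) (approx s m) <= 4 * (/ 2) ^ n.
Proof.
  intros H. replace m with (n + (m - n))%nat by lia.
  assert (Hsum : forall p, d (approx s n) (approx s (n + p)) <= 4 * (/ 2) ^ n - 4 * (/ 2) ^ (n + p)).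
  { induction p as [|p IH].
    - rewrite Nat.add_0_r, (metric_refl Hm). lra.
    - rewrite Nat.add_succ_r, inv_pow2_S.
      pose proof (metric_triangle Hm (approx s n) (approx s (n + p)) (approx s (S (n + p)))).
      pose proof (approx_step s (n + p)). lra. }
  pose proof (Hsum (m - n)%nat). pose proof (inv_pow2_pos (n + (m - n))). lra.
Qed.

Lemma approx_agree s t n :
  (forall m i, (m <= n)%nat -> (i < length (net m))%nat ->
     s (to_nat (m, i)) = t (to_nat (m, i))) ->
  approx s n = approx t n.
Proof.
  intros H.
  assert (Hpt : forall m, (m <= n)%nat -> net_point m s = net_point m t).
  { intros m Hmn. unfold net_point. f_equal. apply leading_ones_ext. intros i Hi. auto. }
  induction n as [|n IH]; simpl.
  - apply Hpt; auto.
  - rewrite IH, (Hpt (S n)); auto.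
Qed.

Definition code_map (s : nat -> bool) : Y :=
  proj1_sig (constructive_indefinite_description _
    (compact_cauchy_limit Y d Hm Hc (approx s) (fun n => 4 * (/ 2) ^ n) (approx_cauchy s))).

Lemma code_map_spec s n : d (approx s n) (code_map s) <= 4 * (/ 2) ^ n.
Proof. unfold code_map. destruct constructive_indefinite_description; auto. Qed.

Definition coords_upto (n : nat) : list nat :=
  flat_map (fun m => map (fun i => to_nat (m, i)) (seq 0 (length (net m)))) (seq 0 (S n)).

Lemma in_coords_upto n m i :
  (m <= n)%nat -> (i < length (net m))%nat -> In (to_nat (m, i)) (coords_upto n).
Proof.
  intros H1 H2. apply in_flat_map. exists m. split.
  - apply in_seq. lia.
  - apply (in_map (fun i0 => to_nat (m, i0))). apply in_seq. lia.
Qed.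

Lemma code_map_continuous : continuous (prod_open nat) (metric_open d) code_map.
Proof.
  intros V HV s Hs. destruct (HV _ Hs) as [e [He Hball]].
  destruct (inv_pow2_small (e / 8)) as [n Hn]; [lra|].
  exists (coords_upto n). intros t Ht. apply Hball.
  assert (E : approx s n = approx t n).
  { apply approx_agree. intros m i H1 H2. symmetry. apply Ht, in_coords_upto; auto. }
  pose proof (code_map_spec s n). pose proof (code_map_spec t n). rewrite E in H.
  pose proof (metric_triangle Hm (code_map s) (approx t n) (code_map t)).
  pose proof (metric_sym Hm (code_map s) (approx t n)). lra.
Qed.

Lemma code_map_surjective y : exists s, code_map s = y.
Proof.
  assert (Hk : forall n, exists k, (k < length (net n))%nat /\ d y (nth k (net n) y0) < (/ 2) ^ n).
  { intros n. destruct (net_dense n y) as [c [Hin Hd]].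
    destruct (In_nth _ _ y0 Hin) as [k [Hk1 Hk2]]. exists k. rewrite Hk2. auto. }
  set (k := fun n => proj1_sig (constructive_indefinite_description _ (Hk n))).
  assert (Hk' : forall n, (k n < length (net n))%nat /\ d y (nth (k n) (net n) y0) < (/ 2) ^ n).
  { intros n. unfold k. destruct constructive_indefinite_description; auto. }
  set (s := fun p => let (m, i) := of_nat p in Nat.ltb i (k m)).
  assert (Hpt : forall n, net_point n s = nth (k n) (net n) y0).
  { intros n. unfold net_point. f_equal.
    rewrite (leading_ones_ext _ _ (fun i => Nat.ltb i (k n))).
    - rewrite leading_ones_ltb. specialize (Hk' n). lia.
    - intros i _. unfold s. rewrite cancel_of_to. reflexivity. }
  (* consecutive selected points are within [(/2)^n + (/2)^(n+1)] of each other,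
     so no jump is refused *)
  assert (Happrox : forall n, approx s n = nth (k n) (net n) y0).
  { induction n as [|n IH]; simpl; [apply Hpt|].
    rewrite IH, Hpt. destruct Rlt_dec as [_|Hn]; auto. exfalso; apply Hn.
    pose proof (metric_triangle Hm (nth (k n) (net n) y0) y (nth (k (S n)) (net (S n)) y0)).
    rewrite (metric_sym Hm _ y) in H. pose proof (Hk' n). pose proof (Hk' (S n)).
    rewrite inv_pow2_S in *. pose proof (inv_pow2_pos n). lra. }
  exists s. apply (metric_eq0 Hm). apply Rle_antisym; [|apply (metric_ge0 Hm)].
  apply Rnot_lt_le. intros Hpos.
  destruct (inv_pow2_small (d (code_map s) y / 5)) as [n Hn]; [lra|].
  pose proof (code_map_spec s n). rewrite Happrox in H.
  pose proof (metric_triangle Hm (code_map s) (nth (k n) (net n) y0) y).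
  pose proof (metric_sym Hm (code_map s) (nth (k n) (net n) y0)).
  pose proof (metric_sym Hm y (nth (k n) (net n) y0)).
  pose proof (Hk' n). lra.
Qed.

End CantorOnto.

Lemma cantor_onto_compact_metric (Y : Type) (d : Y -> Y -> R) :
  is_metric d -> Defs.compact (metric_open d) -> (exists y : Y, True) ->
  exists h : (nat -> bool) -> Y,
    continuous (prod_open nat) (metric_open d) h /\ forall y, exists s, h s = y.
Proof.
  intros Hm Hc [y0 _].
  assert (Hnet : forall n, exists l : list Y, forall y, exists c, In c l /\ d y c < (/ 2) ^ n).
  { intros n. apply compact_finite_net; auto. apply inv_pow2_pos. }
  set (net := fun n => proj1_sig (constructive_indefinite_description _ (Hnet n))).
  assert (Hdense : forall n y, exists c, In c (net n) /\ d y c < (/ 2) ^ n).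
  { intros n. unfold net. destruct constructive_indefinite_description; auto. }
  exists (code_map Y d Hm Hc y0 net).
  split; [apply code_map_continuous | apply code_map_surjective]; auto.
Qed.

Lemma continuous_comp {X Y Z : Type} (opX : opens X) (opY : opens Y) (opZ : opens Z)
  (f : X -> Y) (g : Y -> Z) :
  continuous opX opY f -> continuous opY opZ g -> continuous opX opZ (fun x => g (f x)).
Proof. intros Hf Hg W HW. exact (Hf _ (Hg W HW)). Qed.

Lemma prod_open_or (L : Type) (U V : (L -> bool) -> Prop) :
  prod_open L U -> prod_open L V -> prod_open L (fun x => U x \/ V x).
Proof.
  intros HU HV x [Hx|Hx].
  - destruct (HU x Hx) as [l Hl]. exists l. intros psi Hp. left; auto.
  - destruct (HV x Hx) as [l Hl]. exists l. intros psi Hp. right; auto.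
Qed.

Lemma restrict_continuous {M L : Type} (e : M -> L) :
  continuous (prod_open L) (prod_open M) (fun x m => x (e m)).
Proof.
  intros V HV x Hx. destruct (HV _ Hx) as [P HP].
  exists (map e P). intros psi Hp. apply HP.
  intros m Hin. apply Hp, in_map, Hin.
Qed.

Lemma restrict_surjective {M L : Type} (e : M -> L) :
  (forall m m', e m = e m' -> m = m') -> forall s : M -> bool, exists x : L -> bool,
  (fun m => x (e m)) = s.
Proof.
  intros He s.
  exists (fun lam => match excluded_middle_informative (exists m, e m = lam) with
            | left H => s (proj1_sig (constructive_indefinite_description _ H))
            | right _ => false end).
  apply functional_extensionality. intros m.
  destruct excluded_middle_informative as [H|H]; [|exfalso; eauto].
  destruct constructive_indefinite_description as [m' Hm']. simpl. f_equal. auto.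
Qed.

Lemma cube_onto_compact_metric (L Y : Type) (d : Y -> Y -> R) (e : nat -> L) :
  (forall m m', e m = e m' -> m = m') ->
  is_metric d -> Defs.compact (metric_open d) -> (exists y : Y, True) ->
  exists f : (L -> bool) -> Y,
    continuous (prod_open L) (metric_open d) f /\ forall y, exists x, f x = y.
Proof.
  intros He Hm Hc Hne.
  destruct (cantor_onto_compact_metric Y d Hm Hc Hne) as [h [Hh Hs]].
  exists (fun x => h (fun m => x (e m))). split.
  - exact (continuous_comp _ _ _ _ h (restrict_continuous e) Hh).
  - intros y. destruct (Hs y) as [s <-]. destruct (restrict_surjective e He s) as [x <-].
    exists x. reflexivity.
Qed.

Section Fibres.
Variables (L Y : Type) (d : Y -> Y -> R) (f : (L -> bool) -> Y).
Hypothesis Hm : is_metric d.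
Hypothesis Hf : continuous (prod_open L) (metric_open d) f.
Hypothesis Hsurj : forall y, exists x, f x = y.

Definition fibres : ((L -> bool) -> Prop) -> Prop :=
  fun A => exists y, A = (fun x => f x = y).

(* Compactness makes [f] closed: [U] together with the preimages of the balls of radius
   [d (f z) y / 2] around the [f z] cover the cube. *)
Lemma fibre_nbhd (y : Y) (U : (L -> bool) -> Prop) :
  prod_open L U -> (forall x, f x = y -> U x) ->
  exists del, 0 < del /\ forall x, d y (f x) < del -> U x.
Proof.
  intros HU Hfib.
  set (W := fun z x => U x \/ d (f z) (f x) < d (f z) y / 2).
  destruct (cube_compact L (L -> bool) W) as [l Hl].
  - intros z. apply prod_open_or; [exact HU|]. apply (Hf (fun w => d (f z) w < _)), ball_open, Hm.
  - intros x. exists x. destruct (classic (U x)) as [Hu|Hu]; [left; auto|right].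
    rewrite (metric_refl Hm).
    destruct (Rle_lt_or_eq_dec 0 (d (f x) y) (metric_ge0 Hm _ _)) as [H|H]; [lra|].
    exfalso. apply Hu, Hfib, (metric_eq0 Hm), eq_sym, H.
  - destruct (finite_min_pos (fun z => d (f z) y / 2) l) as [del [Hdel Hmin]].
    exists del. split; [exact Hdel|]. intros x Hx.
    destruct (Hl x) as [z [Hin [Hu|Hz]]]; [exact Hu|].
    pose proof (metric_ge0 Hm (f z) (f x)).
    pose proof (Hmin z Hin ltac:(simpl; lra)). simpl in H0.
    pose proof (metric_triangle Hm (f z) (f x) y). pose proof (metric_sym Hm y (f x)).
    lra.
Qed.

Lemma fibres_decomposition : decomposition fibres.
Proof.
  split; [|split].
  - intros A [y ->]. destruct (Hsurj y) as [x Hx]. eauto.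
  - intros A B [y ->] [y' ->] Hne x [H1 H2]. apply Hne. subst. reflexivity.
  - intros x. exists (fun z => f z = f x). split; [exists (f x)|]; reflexivity.
Qed.

Lemma fibres_usc : usc (prod_open L) fibres.
Proof.
  intros A [y ->] U HU HA.
  destruct (fibre_nbhd y U HU HA) as [del [Hdel H]].
  exists (fun x => d y (f x) < del). split; [|split].
  - apply (Hf (fun z => d y z < del)), ball_open, Hm.
  - intros x Hx. rewrite Hx, (metric_refl Hm). exact Hdel.
  - intros B [y' ->] [x [Hx1 Hx2]] x' Hx'. apply H. rewrite Hx', <- Hx1. exact Hx2.
Qed.

Lemma fibres_homeomorphic : homeomorphic (dec_open (prod_open L) fibres) (metric_open d).
Proof.
  set (F := fun A : dec_space fibres =>
              proj1_sig (constructive_indefinite_description _ (proj2_sig A))).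
  assert (HF : forall A, proj1_sig A = (fun x => f x = F A)).
  { intros A. unfold F. destruct constructive_indefinite_description; auto. }
  set (G := fun y => exist fibres (fun x => f x = y) (ex_intro _ y eq_refl)).
  assert (FG : forall y, F (G y) = y).
  { intros y. destruct (Hsurj y) as [x <-].
    assert (E := f_equal (fun P => P x) (HF (G (f x)))). simpl in E.
    symmetry. rewrite <- E. reflexivity. }
  assert (GF : forall A, G (F A) = A).
  { intros [A HA]. apply eq_sig_hprop; [intros; apply proof_irrelevance|].
    simpl. symmetry. exact (HF (exist _ A HA)). }
  exists F, G. split; [exact GF | split; [exact FG | split]].
  - intros V HV x [A [HA Hx]]. rewrite HF in Hx.
    destruct (Hf V HV x) as [l Hl]; [rewrite Hx; exact HA|].
    exists l. intros psi Hp. exists (G (f psi)). split; [rewrite FG; auto | reflexivity].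
  - intros UU HUU y Hy.
    destruct (fibre_nbhd y _ HUU) as [del [Hdel H]].
    { intros x Hx. exists (G y). split; [exact Hy | exact Hx]. }
    exists del. split; [exact Hdel|]. intros y' Hy'.
    destruct (Hsurj y') as [x <-]. destruct (H x Hy') as [A [HA HAx]].
    rewrite HF in HAx. simpl in HAx. rewrite HAx, GF. exact HA.
Qed.

End Fibres.

Lemma lists_miss_point (L : Type) (j : R -> L) :
  (forall a b, j a = j b -> a = b) -> forall l : nat -> list L,
  exists lam, forall n, ~ In lam (l n).
Proof.
  intros Hj l.
  set (pre := fun lam : L => match excluded_middle_informative (exists r, j r = lam) with
      | left H => proj1_sig (constructive_indefinite_description _ H) | right _ => 0 end).
  assert (Hpre : forall r, pre (j r) = r).
  { intros r. unfold pre. destruct excluded_middle_informative as [H|H]; [|exfalso; eauto].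
    destruct constructive_indefinite_description as [r' Hr']. simpl. auto. }
  set (u := fun p : nat => let (n, k) := of_nat p in
             match nth_error (l n) k with Some lam => pre lam | None => 0 end).
  destruct (R_not_enumerable u) as [r0 Hr0].
  exists (j r0). intros n Hin. destruct (In_nth_error _ _ Hin) as [k Hk].
  apply (Hr0 (to_nat (n, k))). unfold u. rewrite cancel_of_to, Hk. apply Hpre.
Qed.

Lemma cube_not_metrizable (L : Type) (j : R -> L) :
  (forall a b, j a = j b -> a = b) -> ~ metrizable (prod_open L).
Proof.
  intros Hj [d [Hm Hiff]].
  set (phi := fun _ : L => false).
  assert (Hball : forall n : nat, exists l : list L, forall psi,
     (forall lam, In lam l -> psi lam = phi lam) -> d phi psi < (/ 2) ^ n).
  { intros n. apply (proj2 (Hiff _) (ball_open Hm phi _)).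
    rewrite (metric_refl Hm). apply inv_pow2_pos. }
  set (l := fun n => proj1_sig (constructive_indefinite_description _ (Hball n))).
  assert (Hl : forall n psi, (forall lam, In lam (l n) -> psi lam = phi lam) ->
                 d phi psi < (/ 2) ^ n).
  { intros n. unfold l. destruct constructive_indefinite_description; auto. }
  destruct (lists_miss_point L j Hj l) as [lam0 Hlam0].
  assert (HV : metric_open d (fun x => x lam0 = false)).
  { apply Hiff. intros x Hx. exists (lam0 :: nil). intros psi Hp.
    rewrite Hp; [exact Hx | left; reflexivity]. }
  destruct (HV phi eq_refl) as [e [He Hfalse]].
  destruct (inv_pow2_small e He) as [n Hn].
  set (psi := fun lam => if excluded_middle_informative (lam = lam0) then true else false).
  assert (Hpsi : psi lam0 = false).
  { apply Hfalse. eapply Rlt_trans; [apply (Hl n)|exact Hn].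
    intros lam Hin. unfold psi. destruct excluded_middle_informative; auto.
    subst. exfalso; eapply Hlam0; eauto. }
  unfold psi in Hpsi. destruct excluded_middle_informative; [discriminate | tauto].
Qed.

Theorem mainTheorem3 (L : Type) (Y : Type) (d : Y -> Y -> R)
  (hL : exists j : R -> L, forall a b, j a = j b -> a = b)
  (hY : dendrite d) :
  (exists D : ((L -> bool) -> Prop) -> Prop,
     decomposition D /\ usc (prod_open L) D /\
     homeomorphic (dec_open (prod_open L) D) (metric_open d))
  /\ ~ metrizable (prod_open L).
Proof.
  destruct hL as [j Hj].
  destruct hY as [Hm [Hne [Hc _]]].
  split; [|exact (cube_not_metrizable L j Hj)].
  assert (He : forall m m', j (INR m) = j (INR m') -> m = m').
  { intros m m' E. apply INR_eq, Hj, E. }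
  destruct (cube_onto_compact_metric L Y d (fun m => j (INR m)) He Hm Hc Hne)
    as [f [Hf Hsurj]].
  exists (fibres L Y f). split; [|split].
  - apply fibres_decomposition; auto.
  - apply (fibres_usc L Y d f); auto.
  - apply fibres_homeomorphic; auto.
Qed.
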